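(* Let $G=HN$ be a finite non-Frobenius $2$-transitive affine group of degree $p^k$ ($p$ prime), with $N\cong\mathbb F_p^k$ and $H$ the stabiliser of $0$, and suppose $H\le\Gamma\mathrm L_1(p^k)$. If $\kappa(G)=2$, then $k$ is even and $|H|=2(p^k-1)$.
   Context: A derangement is an element fixing no point; $\kappa(G)$ is the number of conjugacy classes of derangements. A Frobenius group is a transitive non-regular group in which only the identity fixes more than one point. $\Gamma\mathrm L_1(p^k)=\mathbb F_{p^k}^\times\rtimes\mathrm{Gal}(\mathbb F_{p^k}/\mathbb F_p)$ acting semilinearly on $\mathbb F_{p^k}\cong\mathbb F_p^k$. *)

From HB Require Import structures.
From mathcomp Require Import all_boot all_order all_algebra all_fingroup.
Set Implicit Arguments. Unset Strict Implicit. Unset Printing Implicit Defensive.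
Import GRing.Theory.
Local Open Scope ring_scope.

(* The natural module V = F_p^k is modelled by a finite field F of order p^k;
   permutation groups of degree p^k are subgroups of {perm F}. *)

Definition transl (F : finFieldType) (b : F) : {perm F} := perm (@addIr F b).

Definition transl_set (F : finFieldType) : {set {perm F}} :=
  [set transl b | b : F].

(* Gamma L_1(F): semilinear maps x |-> a * s(x), a <> 0, s a field automorphism
   of F (every ring endomorphism of a finite field is an automorphism, and
   automatically fixes the prime field, i.e. lies in Gal(F/F_p)). *)
Definition in_GammaL1 (F : finFieldType) (f : {perm F}) : Prop :=
  exists a : F, a != 0 /\ exists s : {rmorphism F -> F}, forall x, f x = a * s x.

Local Open Scope group_scope.

Definition two_transitive (T : finType) (G : {set {perm T}}) : Prop :=
  forall x1 x2 y1 y2 : T, x1 != x2 -> y1 != y2 ->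
    exists2 g, g \in G & g x1 = y1 /\ g x2 = y2.

Definition frobenius_perm (T : finType) (G : {set {perm T}}) : Prop :=
  [/\ [transitive G, on [set: T] | 'P],
      ~ (forall g, g \in G -> (exists x, g x = x) -> g = 1) &
      forall g, g \in G -> forall x y : T, x != y -> g x = x -> g y = y -> g = 1].

Definition derangement (T : finType) (g : {perm T}) : bool :=
  [forall x, g x != x].

Definition kappa (T : finType) (G : {group {perm T}}) : nat :=
  #|[set C in classes G | [forall g in C, derangement g]]|.

Definition stab0 (F : finFieldType) (G : {set {perm F}}) : {set {perm F}} :=
  'C_G[0%R | 'P].

From HB Require Import structures.
From mathcomp Require Import all_boot all_order all_algebra all_fingroup.
From mathcomp Require Import cyclic ring.
Set Implicit Arguments. Unset Strict Implicit. Unset Printing Implicit Defensive.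
Import GRing.Theory.

(* Every element of G is a semiaffine map x |-> a s(x) + b with s a field
   automorphism, and since the automorphisms of a finite field commute, the
   automorphism part s is invariant under conjugation in G.  An element h of
   the two-point stabiliser G_{0,1} is itself an automorphism; x - h x vanishes
   at 0 and 1, so it misses some value b, and x |-> h x + b is a derangement.
   These derangements lie in distinct classes, whence |G_{0,1}| <= kappa(G) = 2.
   If G_{0,1} = 1 then G is Frobenius, so G_{0,1} = {1, s} with s an involutive
   automorphism; then |F| = |Fix s|^2, so k is even, and |H| = (p^k - 1) |G_{0,1}|
   by the orbit-stabiliser theorem. *)

Section FiniteFieldAutomorphisms.
Local Open Scope ring_scope.
Variable F : finFieldType.
Implicit Types (s t r : {rmorphism F -> F}) (x y : F).

Lemma fin_rmorph_expr s : exists m, forall x, x != 0 -> s x = x ^+ m.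
Proof.
have [u defU] : exists u : {unit F}, [set: {unit F}] = <[u]>%g.
  exact/cyclicP/field_unit_group_cyclic.
have powu y : y != 0 -> exists i, y = FinRing.uval u ^+ i.
  move=> nz_y; have Uy : y \is a GRing.unit by rewrite unitfE.
  have: FinRing.unit F Uy \in <[u]>%g by rewrite -defU inE.
  by case/cycleP=> i def_y; exists i; rewrite -FinRing.val_unitX -def_y.
have nz_su : s (FinRing.uval u) != 0 by rewrite fmorph_eq0 -unitfE (valP u).
have [m def_su] := powu _ nz_su.
by exists m => _ /powu[i ->]; rewrite rmorphXn def_su -!exprM mulnC.
Qed.

Lemma fin_rmorph_comm s t x : s (t x) = t (s x).
Proof.
have [-> | nz_x] := eqVneq x 0; first by rewrite !rmorph0.
have [[m sE] [n tE]] := (fin_rmorph_expr s, fin_rmorph_expr t).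
by rewrite tE // sE ?expf_neq0 // sE // tE ?expf_neq0 // -!exprM mulnC.
Qed.

Lemma card_fixed_involution s x1 : involutive s -> s x1 != x1 ->
  #|F| = (#|[set x | s x == x]| ^ 2)%N.
Proof.
move=> sK s_x1; set K := [set x | s x == x].
(* f is additive with kernel K, and its image {y | s y = - y} is the K-line through f x1. *)
pose f x := x - s x; set I := f @: [set: F].
have fD x y : f (x + y) = f x + f y by rewrite /f rmorphD; ring.
have card_fibres : #|F| = (#|I| * #|K|)%N.
  rewrite -cardsT -sum1_card (partition_big_imset f) /= -/I -sum_nat_const.
  apply: eq_bigr => _ /imsetP[x _ ->]; rewrite sum1_card.
  rewrite -(card_imset (mem K) (addrI x)); apply: eq_card => z.
  rewrite [in LHS]unfold_in in_setT /=.
  apply/eqP/imsetP => [fz | [y /[!inE] /eqP sy ->]]; last first.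
    by rewrite fD /f sy subrr addr0.
  exists (z - x); last by rewrite addrC subrK.
  rewrite inE rmorphB -subr_eq0; apply/eqP.
  by transitivity (- (f z - f x)); [rewrite /f; ring | rewrite fz subrr oppr0].
have fK x : s (f x) = - f x by rewrite /f rmorphB sK opprB.
have nz_fx1 : f x1 != 0 by rewrite /f subr_eq0 eq_sym.
have defI : I = [set k * f x1 | k in K].
  apply/setP => y; apply/imsetP/imsetP => [[x _ ->] | [k /[!inE] /eqP sk ->]].
    exists (f x / f x1); last by rewrite divfK.
    by rewrite inE fmorph_div !fK mulNr divrN opprK.
  by exists (k * x1); rewrite // /f rmorphM sk mulrBr.
by rewrite card_fibres defI card_imset ?expn2 //; apply: mulIf.
Qed.

Definition semiaffine (a : F) s (b x : F) : F := a * s x + b.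

Lemma semiaffine_conj_rmorph a1 a2 a b1 b2 b s1 s2 r : a1 != 0 -> a != 0 ->
  semiaffine a1 s1 b1 \o semiaffine a r b
    =1 semiaffine a r b \o semiaffine a2 s2 b2 ->
  s1 =1 s2.
Proof.
move=> nz_a1 nz_a conj_eq.
(* Since s1 and r commute, both sides are semiaffine; compare them at 0 and at 1. *)
have {}conj_eq y : a1 * s1 a * r (s1 y) + (a1 * s1 b + b1)
                 = a * r a2 * r (s2 y) + (a * r b2 + b).
  move: (conj_eq y); rewrite /semiaffine /= !rmorphD !rmorphM.
  by rewrite (fin_rmorph_comm s1 r) !mulrDr !mulrA !addrA.
have eq_b := conj_eq 0; rewrite !rmorph0 !mulr0 !add0r in eq_b.
have eq_a := conj_eq 1; rewrite !rmorph1 !mulr1 eq_b in eq_a; move/addIr: eq_a => eq_a.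
move=> y; move: (conj_eq y); rewrite eq_b eq_a => /addIr/mulfI.
by rewrite -eq_a mulf_neq0 ?fmorph_eq0 // => /(_ isT)/fmorph_inj.
Qed.

End FiniteFieldAutomorphisms.

Lemma prime_power_square_even (p k m : nat) : prime p -> p ^ k = m ^ 2 -> ~~ odd k.
Proof.
move=> p_pr /(congr1 (logn p)); rewrite pfactorK // lognX => ->.
by rewrite oddM.
Qed.

Section Derangements.
Local Open Scope group_scope.
Variable T : finType.
Implicit Types (G : {group {perm T}}) (d g c : {perm T}).

Lemma derangementJ g c : derangement (g ^ c) = derangement g.
Proof.
apply/forallP/forallP => der x.
  by have := der (c x); rewrite conjgE !permM permK (inj_eq perm_inj).
by rewrite conjgE !permM -{2}(permKV c x) (inj_eq perm_inj).
Qed.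

Lemma derangement_card_le2_eq d1 d2 : #|T| <= 2 ->
  derangement d1 -> derangement d2 -> d1 = d2.
Proof.
move=> le2 /forallP der1 /forallP der2; apply/permP => x.
have: #|predC1 x| <= 1 by rewrite cardC1 -subn1 leq_subLR.
by move/card_le1_eqP; apply; rewrite !inE.
Qed.

Lemma kappa_le1 G : #|T| <= 2 -> kappa G <= 1.
Proof.
move=> le2; apply/card_le1_eqP => C1 C2.
move=> /setIdP[/imsetP[d1 _ ->] /forall_inP der1].
move=> /setIdP[/imsetP[d2 _ ->] /forall_inP der2].
by rewrite (derangement_card_le2_eq le2 (der1 _ (class_refl _ _)) (der2 _ (class_refl _ _))).
Qed.

End Derangements.

Lemma in_two_point_stab (T : finType) (G : {set {perm T}}) x0 x1 g :
  (g \in 'C_('C_G[x0 | 'P])[x1 | 'P])%g = [&& g \in G, g x0 == x0 & g x1 == x1].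
Proof. by rewrite !inE !sub1set !inE /= -andbA. Qed.

Section TwoTransitive.
Local Open Scope group_scope.
Variables (T : finType) (G : {group {perm T}}) (x0 x1 : T).
Hypotheses (neq_x01 : x0 != x1) (G2 : two_transitive G).

Lemma two_transitive_transitive : [transitive G, on [set: T] | 'P].
Proof.
apply/imsetP; exists x0 => //; apply/setP => y; rewrite inE; apply/esym/orbitP.
have neq_yz : y != (if y == x0 then x1 else x0) by case: (eqVneq y x0) => [-> |].
by have [g Gg [gx0 _]] := G2 neq_x01 neq_yz; exists g.
Qed.

Lemma two_transitive_stab_move y : y != x0 ->
  exists2 g, g \in 'C_G[x0 | 'P] & g x1 = y.
Proof.
move=> neq_y0; have [g Gg [g0 g1]] : exists2 g, g \in G & g x0 = x0 /\ g x1 = y.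
  by apply: G2; rewrite // eq_sym.
by exists g; rewrite // inE Gg; apply/astab1P.
Qed.

Lemma orbit_stab_two_transitive : orbit 'P 'C_G[x0 | 'P] x1 = [set~ x0].
Proof.
apply/setP => y; rewrite !inE; apply/orbitP/idP => [[h /setIP[_ /astab1P h0] <-] | ].
  by rewrite -h0 /= (inj_eq perm_inj) eq_sym.
exact: two_transitive_stab_move.
Qed.

Lemma card_stab_two_transitive :
  #|'C_G[x0 | 'P]| = ((#|T| - 1) * #|'C_('C_G[x0 | 'P])[x1 | 'P]|)%N.
Proof.
by rewrite -(card_orbit_stab 'P 'C_G[x0 | 'P]%G x1) orbit_stab_two_transitive cardsC1 subn1.
Qed.

Lemma two_point_stab_conj_trivial : 'C_('C_G[x0 | 'P])[x1 | 'P] = 1 ->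
  forall g, g \in G -> forall x y, x != y -> g x = x -> g y = y -> g = 1.
Proof.
move=> triv g Gg x y neq_xy gx gy.
have [c Gc [cx0 cx1]] := G2 neq_x01 neq_xy.
have fixJ z : g (c z) = c z -> (g ^ c^-1) z = z.
  by move=> fix_cz; rewrite conjgE invgK !permM fix_cz permK.
have: g ^ c^-1 \in 'C_('C_G[x0 | 'P])[x1 | 'P].
  by rewrite in_two_point_stab groupJ ?groupV // !fixJ ?cx0 ?cx1 ?eqxx.
by rewrite triv => /set1P/eqP; rewrite conjg_eq1 => /eqP.
Qed.

Lemma card_le2_of_semiregular :
  (forall g, g \in G -> (exists x, g x = x) -> g = 1) -> #|T| <= 2.
Proof.
move=> semireg; apply: (@leq_trans #|[set x0; x1]|); last by rewrite cards2 neq_x01.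
rewrite -cardsT; apply/subset_leq_card/subsetP => y _.
rewrite !inE; have [// | /two_transitive_stab_move[g /setIP[Gg /astab1P g0] <-]] := eqVneq y x0.
by rewrite (semireg g Gg) ?perm1 ?eqxx ?orbT //; exists x0.
Qed.

Lemma frobenius_of_trivial_two_point_stab :
  1 < kappa G -> 'C_('C_G[x0 | 'P])[x1 | 'P] = 1 -> frobenius_perm G.
Proof.
move=> kappa_gt1 triv; split; first exact: two_transitive_transitive.
  by move/card_le2_of_semiregular/(kappa_le1 G); rewrite leqNgt kappa_gt1.
exact: two_point_stab_conj_trivial.
Qed.

End TwoTransitive.

Lemma translE (F : finFieldType) (b x : F) : transl b x = (x + b)%R.
Proof. by rewrite permE. Qed.

Lemma derangement_mul_transl (F : finFieldType) (h : {perm F}) x y :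
  x != y -> h x = x -> h y = y -> exists b, derangement (h * transl b)%g.
Proof.
move=> neq_xy hx hy; pose f z := (z - h z)%R.
have not_inj_f : ~ injective f.
  by move=> /(_ x y); rewrite /f hx hy !subrr => /(_ erefl) /eqP; rewrite (negbTE neq_xy).
have [b fNb] : exists b, b \notin codom f.
  apply/existsP; rewrite -negb_forall; apply: contra_notN not_inj_f => /forallP f_onto.
  have: #|codom f| == #|F|.
    rewrite eqn_leq leq_image_card /=.
    by apply/subset_leq_card/subsetP => z _; exact: f_onto.
  by move/image_injP => inj_f z1 z2; apply: inj_f.
exists b; apply/forallP => z; rewrite permM translE; apply: contra fNb => /eqP hzb.
by apply/codomP; exists z; rewrite /f -{1}hzb addrAC subrr add0r.
Qed.

Section SemilinearAffineGroup.
Local Open Scope ring_scope.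
Variables (F : finFieldType) (G : {group {perm F}}).
Hypotheses (translG : transl_set F \subset G)
           (stab0_GammaL1 : forall h, h \in stab0 G -> in_GammaL1 h).
Local Notation G01 := ('C_('C_G[0%R | 'P])[1%R | 'P])%g.

Lemma mem_transl b : transl b \in G.
Proof. by apply: (subsetP translG); apply/imsetP; exists b. Qed.

Lemma semiaffine_of_mem g : g \in G ->
  exists a s, a != 0 /\ g =1 semiaffine a s (g 0).
Proof.
move=> Gg; pose h := (g * transl (- g 0))%g.
have hE x : h x = g x - g 0 by rewrite permM translE.
have: h \in stab0 G by rewrite inE groupM ?mem_transl //; apply/astab1P; exact: etrans (hE 0) (subrr _).
case/stab0_GammaL1 => a [nz_a [s hs]]; exists a, s; split=> // x.
by rewrite /semiaffine -hs hE subrK.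
Qed.

Lemma two_point_stab_rmorph h : h \in G01 ->
  exists s : {rmorphism F -> F}, h =1 s.
Proof.
rewrite in_two_point_stab => /and3P[Gh /eqP h0 /eqP h1].
have [a [s [_ hE]]] := semiaffine_of_mem Gh.
have a1 : a = 1 by move: (hE 1); rewrite h1 h0 /semiaffine rmorph1 mulr1 addr0.
by exists s => x; rewrite hE h0 a1 /semiaffine mul1r addr0.
Qed.

Lemma conj_class_transl_inj h1 h2 b1 b2 : h1 \in G01 -> h2 \in G01 ->
  ((h1 * transl b1) ^: G = (h2 * transl b2) ^: G)%g -> h1 = h2.
Proof.
move=> /two_point_stab_rmorph[s1 h1E] /two_point_stab_rmorph[s2 h2E] eq_cl.
have transl_semiaffine (h : {perm F}) (s : {rmorphism F -> F}) b :
    h =1 s -> (h * transl b)%g =1 semiaffine 1 s b.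
  by move=> hE x; rewrite permM translE hE /semiaffine mul1r.
have: (h2 * transl b2)%g \in ((h1 * transl b1) ^: G)%g by rewrite eq_cl class_refl.
case/imsetP => c Gc conj_c; have [a [r [nz_a cE]]] := semiaffine_of_mem Gc.
suff eq_s : s2 =1 s1 by apply/permP => x; rewrite h1E h2E eq_s.
apply: (@semiaffine_conj_rmorph F 1 1 a b2 b1 (c 0) s2 s1 r (oner_neq0 F) nz_a) => y /=.
rewrite -!cE -(transl_semiaffine _ _ b2 h2E) -(transl_semiaffine _ _ b1 h1E).
by rewrite conj_c conjgE !permM permK.
Qed.

Lemma card_two_point_stab_le_kappa : (#|G01| <= kappa G)%N.
Proof.
pose shift (h : {perm F}) := odflt 0 [pick b | derangement (h * transl b)%g].
have shiftP h : h \in G01 -> derangement (h * transl (shift h))%g.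
  rewrite in_two_point_stab => /and3P[_ /eqP h0 /eqP h1].
  rewrite /shift; case: pickP => [// | none].
  by have [b] := derangement_mul_transl (oner_neq0 F) h1 h0; rewrite none.
pose cl h := ((h * transl (shift h)) ^: G)%g.
have cl_inj : {in G01 &, injective cl} by move=> ? ? ? ?; apply: conj_class_transl_inj.
rewrite -(card_in_imset cl_inj); apply/subset_leq_card/subsetP => _ /imsetP[h h01 ->].
have Gh : h \in G by move: h01; rewrite in_two_point_stab => /and3P[].
rewrite inE mem_classes ?groupM ?mem_transl //=.
by apply/forall_inP => _ /imsetP[c _ ->]; rewrite derangementJ shiftP.
Qed.

Lemma two_point_stab_involution : #|G01| = 2%N ->
  exists s : {rmorphism F -> F}, involutive s /\ exists x, s x != x.
Proof.
move=> card2; have /trivgPn[sg sg01 nt_sg] : G01 != 1%g by rewrite trivg_card1 card2.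
have [s sE] := two_point_stab_rmorph sg01.
have sg2 : (sg * sg = 1)%g by rewrite -expg2 -card2 expg_cardG.
exists s; split; first by move=> x; rewrite -!sE -permM sg2 perm1.
have [x sgx] : exists x, sg x != x.
  apply/existsP; apply: contraR nt_sg => /existsPn fix_sg.
  by apply/eqP/permP => x; rewrite perm1; apply/eqP/negPn/fix_sg.
by exists x; rewrite -sE.
Qed.

End SemilinearAffineGroup.

Theorem proposition4p9 (p k : nat) (F : finFieldType) (G : {group {perm F}}) :
  prime p -> #|F| = (p ^ k)%N ->
  transl_set F \subset G ->
  (forall h, h \in stab0 G -> in_GammaL1 h) ->
  two_transitive G ->
  ~ frobenius_perm G ->
  kappa G = 2 ->
  ~~ odd k /\ #|stab0 G| = (2 * (p ^ k - 1))%N.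
Proof.
move=> p_pr cardF translG GammaL1 G2 not_frob kappa2.
have neq01 : (0 : F)%R != 1%R by rewrite eq_sym oner_eq0.
set G01 := ('C_('C_G[0%R | 'P])[1%R | 'P])%G.
have le2 : #|G01| <= 2 by rewrite -kappa2 card_two_point_stab_le_kappa.
have gt1 : 1 < #|G01|.
  rewrite ltnNge; apply: contra_notN not_frob => le1.
  apply: (frobenius_of_trivial_two_point_stab neq01 G2); first by rewrite kappa2.
  exact: card_le1_trivg.
have card2 : #|G01| = 2 by apply/eqP; rewrite eqn_leq le2 gt1.
have [s [s_inv [x nfix_x]]] := two_point_stab_involution translG GammaL1 card2.
split.
  by apply: (prime_power_square_even p_pr); rewrite -cardF (card_fixed_involution s_inv nfix_x).
by rewrite /stab0 (card_stab_two_transitive neq01 G2) card2 cardF mulnC subn1.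
Qed.
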